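(* Let $c\neq 0$ and let $(\phi(r),A(r))$, $r>0$, be a solution of \begin{align*} & (1+r^2) A \phi''+\left(r(1+r^2)A\phi'^2+(1+r^2)A'+\frac{2+4 r^2}{r} A\right)\phi'+2\phi=0, \\ & (1+r^2)A'-\frac{1+3 r^2}{r} (1-A) -2 r \phi^2 + r(1+r^2) A \phi'^2 = 0, \end{align*} regular at $r=0$ with $\phi(r)= c-\tfrac13 c r^2+O(r^4)$ and $A(r)= 1+\tfrac23 c^2 r^2+O(r^4)$, defined on an interval $(0,R)$. Then the function $B(r):=(A(r)-1)(1+r^2)$ has no local maximum in $(0,R)$; more precisely, at any point $r_0\in(0,R)$ with $B'(r_0)=0$ one has $$B''(r_0)=2\phi'(r_0)^2+4r_0^2\phi(r_0)^2\phi'(r_0)^2+4\big(r_0\phi'(r_0)+\phi(r_0)\big)^2\;(>0).$$ Consequently $B$ is increasing on $(0,R)$ and $A(r)\ge 1$ for all $r\in(0,R)$. *)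

From Stdlib Require Import Reals Lra.
Open Scope R_scope.

Definition bigO4_at_0plus (f g : R -> R) : Prop :=
  exists K delta : R, 0 < delta /\
    forall r, 0 < r < delta -> Rabs (f r - g r) <= K * r ^ 4.

(* The ODE system at radius r, with phi1 = phi', phi2 = phi'', A1 = A'. *)
Definition ode1 (r ph ph1 ph2 a a1 : R) : Prop :=
  (1 + r^2) * a * ph2
  + (r * (1 + r^2) * a * ph1^2 + (1 + r^2) * a1 + (2 + 4 * r^2) / r * a) * ph1
  + 2 * ph = 0.

Definition ode2 (r ph ph1 a a1 : R) : Prop :=
  (1 + r^2) * a1 - (1 + 3 * r^2) / r * (1 - a) - 2 * r * ph^2
  + r * (1 + r^2) * a * ph1^2 = 0.

Definition Bfun (A : R -> R) (r : R) : R := (A r - 1) * (1 + r^2).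

From Stdlib Require Import Reals Lra Classical.
From Coquelicot Require Import Coquelicot.
Open Scope R_scope.

(* Along a solution, the second equation expresses B' without A':
     B' = - B / r + 2 r phi^2 - r (B + 1 + r^2) phi'^2.
   Differentiating this once more and eliminating phi'' with the first equation gives,
   at a critical point of B, B'' = 2 phi'^2 + 4 r^2 phi^2 phi'^2 + 4 (r phi' + phi)^2.
   This is positive unless phi = phi' = 0 there; but then also B = 0, and backward
   uniqueness for the system (a Gronwall estimate on phi^2 + phi'^2) would make phi vanish
   near 0, against phi(0) = c <> 0.  So B' only crosses 0 upwards; since B > 0 and B -> 0
   as r -> 0+, B' is never negative, and a plateau of B would be a critical point with
   B'' = 0.  Hence B is strictly increasing and positive, i.e. A > 1. *)

Lemma continuity_pt_ball (f : R -> R) x :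
  continuity_pt f x -> forall eps, 0 < eps ->
  exists d, 0 < d /\ forall y, Rabs (y - x) < d -> Rabs (f y - f x) < eps.
Proof.
  intros Hc eps He. destruct (Hc eps He) as [d [Hd Hx]].
  exists d; split; [exact Hd|]. intros y Hy.
  destruct (Req_dec y x) as [->|Hne].
  - rewrite Rminus_diag, Rabs_R0; exact He.
  - apply Hx. repeat split; auto.
Qed.

Lemma continuity_pt_le_right (f : R -> R) m b v :
  continuity_pt f m -> m < b -> (forall x, m < x <= b -> f x <= v) -> f m <= v.
Proof.
  intros Hc Hmb Hle. apply Rnot_lt_le; intro Hlt.
  destruct (continuity_pt_ball f m Hc (f m - v)) as [d [Hd Hx]]; [lra|].
  set (x := m + Rmin (d / 2) (b - m)).
  assert (Hmin : 0 < Rmin (d / 2) (b - m) <= d / 2 /\ Rmin (d / 2) (b - m) <= b - m)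
    by (repeat split; [apply Rmin_pos | apply Rmin_l | apply Rmin_r]; lra).
  assert (Hfx : f x <= v) by (apply Hle; unfold x; lra).
  assert (Hd' : Rabs (f x - f m) < f m - v) by (apply Hx; unfold x; rewrite Rabs_right; lra).
  rewrite Rabs_minus_sym, Rabs_right in Hd'; lra.
Qed.

Lemma continuity_pt_eq_right (f : R -> R) m b v :
  continuity_pt f m -> m < b -> (forall x, m < x <= b -> f x = v) -> f m = v.
Proof.
  intros Hc Hmb Heq. apply Rle_antisym.
  - apply (continuity_pt_le_right f m b); auto. intros x Hx; rewrite Heq; lra.
  - apply Ropp_le_cancel, (continuity_pt_le_right (fun x => - f x) m b).
    + exact (continuity_pt_opp f m Hc).
    + exact Hmb.
    + intros x Hx; rewrite Heq; lra.
Qed.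

Lemma MVT_open (f f' : R -> R) a b x y :
  (forall c, a < c < b -> derivable_pt_lim f c (f' c)) -> a < x -> x < y -> y < b ->
  exists c, f y - f x = f' c * (y - x) /\ x < c < y.
Proof. intros Hd Hax Hxy Hyb. apply MVT_cor2; [exact Hxy|]. intros; apply Hd; lra. Qed.

Lemma derivable_pt_lim_pos_right (f : R -> R) m s l :
  derivable_pt_lim f m l -> 0 < l -> f m = 0 -> m < s ->
  exists x, m < x <= s /\ 0 < f x.
Proof.
  intros Hd Hl Hm Hs. destruct (Hd (l / 2)) as [d Hdd]; [lra|].
  set (h := Rmin (d / 2) (s - m)).
  assert (Hh : 0 < h <= d / 2 /\ h <= s - m)
    by (pose proof (cond_pos d); repeat split; [apply Rmin_pos | apply Rmin_l | apply Rmin_r]; lra).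
  exists (m + h). split; [lra|].
  assert (Hq : Rabs ((f (m + h) - f m) / h - l) < l / 2).
  { pose proof (cond_pos d). apply Hdd; [lra|]. rewrite Rabs_right; lra. }
  rewrite Hm, Rminus_0_r in Hq. apply Rabs_def2 in Hq.
  replace (f (m + h)) with (f (m + h) / h * h) by (field; lra).
  apply Rmult_lt_0_compat; lra.
Qed.

Lemma downward_continuous_induction (a b : R) (P : R -> Prop) : a < b -> P b ->
  (forall m, a < m < b -> (forall x, m < x <= b -> P x) -> P m) ->
  (forall m, a < m <= b -> P m ->
     exists d, 0 < d /\ forall x, m - d < x <= m -> a < x -> P x) ->
  forall x, a < x <= b -> P x.
Proof.
  intros Hab Pb Hclosed Hopen x Hx. apply NNPP; intro HnPx.
  set (E := fun y => a < y <= b /\ ~ P y).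
  destruct (completeness E) as [m [Hub Hlub]].
  { exists b; intros y [Hy _]; lra. }
  { exists x; split; auto. }
  assert (Hxm : x <= m) by (apply Hub; split; auto).
  assert (Hmb : m <= b) by (apply Hlub; intros y [Hy _]; lra).
  assert (Hright : forall y, m < y <= b -> P y).
  { intros y Hy. apply NNPP; intro Hny.
    assert (y <= m) by (apply Hub; split; [lra | exact Hny]). lra. }
  assert (Pm : P m).
  { destruct (Req_dec m b) as [->|Hmb']; [exact Pb|]. apply Hclosed; [lra | exact Hright]. }
  destruct (Hopen m ltac:(lra) Pm) as [d [Hd Hleft]].
  assert (m <= m - d); [|lra].
  apply Hlub. intros y [Hy Hny].
  assert (y <= m) by (apply Hub; split; auto).
  apply Rnot_lt_le; intro Hyd. apply Hny.
  destruct (Rle_or_lt y m); [apply Hleft | apply Hright]; lra.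
Qed.

Lemma negative_left_of_upcrossings (f f' : R -> R) a s :
  (forall x, a < x <= s -> derivable_pt_lim f x (f' x)) ->
  (forall x, a < x <= s -> f x = 0 -> 0 < f' x) ->
  a < s -> f s < 0 -> forall x, a < x <= s -> f x < 0.
Proof.
  intros Hd Hup Has Hs.
  assert (Hc : forall x, a < x <= s -> continuity_pt f x)
    by (intros x Hx; apply derivable_continuous_pt; exists (f' x); apply Hd, Hx).
  apply downward_continuous_induction; [exact Has | exact Hs | |].
  - intros m Hm Hright.
    assert (Hle : f m <= 0)
      by (apply (continuity_pt_le_right f m s); [apply Hc; lra | lra |];
          intros x Hx; apply Rlt_le, Hright, Hx).
    destruct (Rle_lt_or_eq_dec _ _ Hle) as [Hlt | Hzero]; [exact Hlt|].
    destruct (derivable_pt_lim_pos_right f m s (f' m)) as [x [Hx Hpos]];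
      [apply Hd; lra | apply Hup; [lra | exact Hzero] | exact Hzero | lra |].
    pose proof (Hright x Hx). lra.
  - intros m Hm Hneg.
    destruct (continuity_pt_ball f m (Hc m Hm) (- f m)) as [d [Hd' Hball]]; [lra|].
    exists d. split; [exact Hd'|]. intros x Hx Hax.
    assert (Hxm : Rabs (x - m) < d) by (apply Rabs_def1; lra).
    specialize (Hball x Hxm). apply Rabs_def2 in Hball. lra.
Qed.

Lemma gronwall_backward_zero (u u' : R -> R) (L a b p : R) :
  (forall x, a < x < b -> derivable_pt_lim u x (u' x)) ->
  (forall x, a < x < b -> 0 <= u x) ->
  (forall x, a < x < b -> - L * u x <= u' x) ->
  a < p < b -> u p = 0 -> forall s, a < s <= p -> u s = 0.
Proof.
  intros Hd Hnn Hlow Hp Hup s Hs.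
  destruct (Req_dec s p) as [->|Hsp]; [exact Hup|].
  pose (w x := u x * exp (L * x)).
  pose (w' x := (u' x + L * u x) * exp (L * x)).
  assert (Hexp : forall x, derivable_pt_lim (fun y => exp (L * y)) x (L * exp (L * x))).
  { intro x. replace (L * exp (L * x)) with (exp (L * x) * (L * 1)) by ring.
    apply (derivable_pt_lim_comp (mult_real_fct L id) exp).
    - apply derivable_pt_lim_scal, derivable_pt_lim_id.
    - apply derivable_pt_lim_exp. }
  assert (Hw : forall x, a < x < b -> derivable_pt_lim w x (w' x)).
  { intros x Hx. unfold w'.
    replace ((u' x + L * u x) * exp (L * x))
      with (u' x * exp (L * x) + u x * (L * exp (L * x))) by ring.
    exact (derivable_pt_lim_mult u (fun y => exp (L * y)) x _ _ (Hd x Hx) (Hexp x)). }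
  destruct (MVT_open w w' a b s p Hw) as [c [Hmvt Hc]]; try lra.
  assert (Hw'c : 0 <= w' c).
  { unfold w'. apply Rmult_le_pos; [| apply Rlt_le, exp_pos].
    pose proof (Hlow c ltac:(lra)). lra. }
  assert (Hws : w s <= 0) by (unfold w in Hmvt |- *; rewrite Hup in Hmvt; nra).
  pose proof (Hnn s ltac:(lra)). pose proof (exp_pos (L * s)).
  unfold w in Hws. nra.
Qed.

Lemma quadratic_form_lower_bound k D g1 g2 x y kappa M1 M2 :
  0 < kappa <= k -> Rabs g1 <= M1 -> Rabs g2 <= M2 ->
  k * D = g1 * (x * y) - 2 * g2 * y^2 ->
  - ((M1 + 2 * M2) / kappa) * (x^2 + y^2) <= D.
Proof.
  intros Hk Hg1 Hg2 Hid.
  assert (Hcross : Rabs (x * y) <= x^2 + y^2) by (apply Rabs_le; split; nra).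
  assert (Hrhs : Rabs (g1 * (x * y) - 2 * g2 * y^2) <= (M1 + 2 * M2) * (x^2 + y^2)).
  { unfold Rminus. eapply Rle_trans; [apply Rabs_triang|].
    rewrite Rabs_Ropp, (Rabs_mult g1), (Rabs_mult (2 * g2)), (Rabs_mult 2), (Rabs_right 2),
      (Rabs_right (y^2)) by nra.
    assert (Rabs g1 * Rabs (x * y) <= M1 * (x^2 + y^2))
      by (apply Rmult_le_compat; auto using Rabs_pos).
    assert (Rabs g2 * y^2 <= M2 * (x^2 + y^2))
      by (apply Rmult_le_compat; auto using Rabs_pos; nra).
    lra. }
  rewrite <- Hid in Hrhs. apply Rabs_le_between in Hrhs.
  assert (HM : 0 <= (M1 + 2 * M2) * (x^2 + y^2))
    by (apply Rmult_le_pos; [pose proof (Rabs_pos g1); pose proof (Rabs_pos g2); lra | nra]).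
  apply (Rmult_le_reg_l kappa); [lra|].
  replace (kappa * (- ((M1 + 2 * M2) / kappa) * (x^2 + y^2)))
    with (- ((M1 + 2 * M2) * (x^2 + y^2))) by (field; lra).
  destruct (Rle_or_lt 0 D); nra.
Qed.

Lemma ex_derive_locally_close (f : R -> R) x eps :
  ex_derive f x -> 0 < eps -> locally x (fun y => Rabs (f y - f x) < eps).
Proof.
  intros Hf He.
  exact (proj1 (filterlim_locally f (f x)) (ex_derive_continuous f x Hf) (mkposreal eps He)).
Qed.

Lemma bigO4_at_0plus_o_sq (f g : R -> R) :
  bigO4_at_0plus f g -> forall e, 0 < e ->
  exists delta, 0 < delta /\ forall r, 0 < r < delta -> Rabs (f r - g r) <= e * r^2.
Proof.
  intros [K [d [Hd HK]]] e He.
  set (k := e / (Rabs K + 1)).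
  assert (Hk : 0 < k) by (unfold k; pose proof (Rabs_pos K); apply Rdiv_lt_0_compat; lra).
  exists (Rmin d (Rmin 1 k)).
  pose proof (Rmin_l d (Rmin 1 k)). pose proof (Rmin_r d (Rmin 1 k)).
  pose proof (Rmin_l 1 k). pose proof (Rmin_r 1 k).
  split; [repeat apply Rmin_pos; lra|]. intros r Hr.
  eapply Rle_trans; [apply HK; lra|].
  assert (Hr2 : r^2 <= k) by nra.
  assert (HKe : (Rabs K + 1) * k = e) by (unfold k; field; pose proof (Rabs_pos K); lra).
  pose proof (Rle_abs K). pose proof (Rabs_pos K).
  assert (0 <= r^2) by nra.
  replace (K * r^4) with (K * r^2 * r^2) by ring.
  apply Rmult_le_compat_r; [lra|]. nra.
Qed.

Lemma bigO4_nonvanishing_near_0 (phi : R -> R) c :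
  c <> 0 -> bigO4_at_0plus phi (fun r => c - 1/3 * c * r^2) ->
  forall s, 0 < s -> exists r, 0 < r < s /\ phi r <> 0.
Proof.
  intros Hc Hasym s Hs.
  assert (Habs : 0 < Rabs c) by (apply Rabs_pos_lt, Hc).
  destruct (bigO4_at_0plus_o_sq _ _ Hasym (Rabs c / 3)) as [d [Hd Hnear]]; [lra|].
  set (r := Rmin d (Rmin 1 s) / 2).
  pose proof (Rmin_l d (Rmin 1 s)). pose proof (Rmin_r d (Rmin 1 s)).
  pose proof (Rmin_l 1 s). pose proof (Rmin_r 1 s).
  pose proof (Rmin_pos d (Rmin 1 s) Hd (Rmin_pos 1 s ltac:(lra) Hs)).
  exists r. split; [unfold r; lra|]. intro Hzero.
  specialize (Hnear r ltac:(unfold r; lra)). rewrite Hzero in Hnear.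
  replace (0 - (c - 1/3 * c * r^2)) with (- (c * (1 - r^2 / 3))) in Hnear by field.
  rewrite Rabs_Ropp, Rabs_mult, (Rabs_right (1 - r^2 / 3)) in Hnear by (unfold r in *; nra).
  assert (Hr1 : r < 1) by (unfold r; lra).
  assert (0 < Rabs c * (1 - 2 * r^2 / 3)) by (apply Rmult_lt_0_compat; [lra | unfold r in *; nra]).
  lra.
Qed.

Lemma Bfun_pos_vanishing_of_bigO4 (A : R -> R) c :
  c <> 0 -> bigO4_at_0plus A (fun r => 1 + 2/3 * c^2 * r^2) ->
  forall eps, 0 < eps -> exists delta, 0 < delta /\ forall r, 0 < r < delta -> 0 < Bfun A r < eps.
Proof.
  intros Hc Hasym eps Heps.
  assert (Hc2 : 0 < c^2) by (apply pow2_gt_0, Hc).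
  destruct (bigO4_at_0plus_o_sq _ _ Hasym (c^2 / 3)) as [d [Hd Hnear]]; [lra|].
  set (k := eps / (2 * c^2)).
  assert (Hk : 0 < k) by (unfold k; apply Rdiv_lt_0_compat; lra).
  exists (Rmin d (Rmin 1 k)).
  pose proof (Rmin_l d (Rmin 1 k)). pose proof (Rmin_r d (Rmin 1 k)).
  pose proof (Rmin_l 1 k). pose proof (Rmin_r 1 k).
  split; [repeat apply Rmin_pos; lra|]. intros r Hr.
  specialize (Hnear r ltac:(lra)). apply Rabs_le_between in Hnear.
  assert (Hr2 : 0 < r^2 < 1) by (split; nra).
  assert (HA : c^2 / 3 * r^2 <= A r - 1 <= c^2 * r^2) by lra.
  assert (Hkc : 2 * c^2 * k = eps) by (unfold k; field; lra).
  unfold Bfun. split; [nra|].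
  assert ((A r - 1) * (1 + r^2) <= 2 * c^2 * r^2) by nra.
  assert (r^2 < k) by nra.
  assert (2 * c^2 * r^2 < 2 * c^2 * k) by (apply Rmult_lt_compat_l; lra).
  lra.
Qed.

Lemma ode2_Bderiv r p p1 a a1 : 0 < r -> ode2 r p p1 a a1 ->
  a1 * (1 + r^2) + 2 * r * (a - 1)
  = - ((a - 1) * (1 + r^2)) / r + 2 * r * p^2
    - r * ((a - 1) * (1 + r^2) + 1 + r^2) * p1^2.
Proof.
  unfold ode2; intros hr E2. rewrite <- Rminus_0_r, <- E2 at 1. field. lra.
Qed.

Lemma critical_point_identity r p p1 p2 a a1 :
  0 < r -> ode1 r p p1 p2 a a1 -> ode2 r p p1 a a1 ->
  a1 * (1 + r^2) + 2 * r * (a - 1) = 0 ->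
  let b := (a - 1) * (1 + r^2) in
  b / r^2 + 2 * p^2 + 4 * r * p * p1 - (b + 1 + r^2) * p1^2 - 2 * r^2 * p1^2
  - 2 * r * (b + 1 + r^2) * p1 * p2
  = 2 * p1^2 + 4 * r^2 * p^2 * p1^2 + 4 * (r * p1 + p)^2.
Proof.
  intros hr E1 E2 Hcrit b.
  pose proof (ode2_Bderiv r p p1 a a1 hr E2) as Hb. fold b in Hb.
  assert (Hbr : b / r^2 = 2 * p^2 - (b + 1 + r^2) * p1^2).
  { replace (b / r^2) with ((- b / r + 2 * r * p^2 - r * (b + 1 + r^2) * p1^2 - 0) * (-1 / r)
      + 2 * p^2 - (b + 1 + r^2) * p1^2) by (field; lra).
    rewrite <- Hb, Hcrit. ring. }
  assert (Hs : (b + 1 + r^2) * (1 + r^2 * p1^2) = 1 + r^2 + 2 * r^2 * p^2).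
  { assert (b = r^2 * (2 * p^2 - (b + 1 + r^2) * p1^2)) by (rewrite <- Hbr; field; lra).
    lra. }
  unfold ode1 in E1.
  replace (2 * r * (b + 1 + r^2) * p1 * p2) with
    (2 * r * p1 * ((1 + r^2) * a * p2 + (r * (1 + r^2) * a * p1^2 + (1 + r^2) * a1
       + (2 + 4 * r^2) / r * a) * p1 + 2 * p)
     - 2 * r^2 * (b + 1 + r^2) * p1^4 - 2 * r * p1^2 * (a1 * (1 + r^2) + 2 * r * (a - 1))
     - (4 * (b + 1 + r^2) + 4 * r^2) * p1^2 - 4 * r * p * p1)
    by (unfold b; field; lra).
  rewrite E1, Hcrit, Hbr.
  apply Rminus_diag_uniq.
  transitivity (2 * p1^2 * ((b + 1 + r^2) * (1 + r^2 * p1^2) - (1 + r^2 + 2 * r^2 * p^2))); [ring|].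
  rewrite Hs. ring.
Qed.

(* Eliminating A' between the two equations: near any point where A > 0, the derivative
   of phi^2 + phi'^2 is bounded by a multiple of phi^2 + phi'^2. *)
Lemma ode_energy_identity r p p1 p2 a a1 :
  0 < r -> ode1 r p p1 p2 a a1 -> ode2 r p p1 a a1 ->
  r * (1 + r^2) * a * (2 * p * p1 + 2 * p1 * p2)
  = (2 * r * (1 + r^2) * a - 4 * r) * (p * p1)
    - 2 * ((1 + 3 * r^2) * (1 - a) + 2 * r^2 * p^2 + (2 + 4 * r^2) * a) * p1^2.
Proof.
  unfold ode1, ode2; intros hr E1 E2.
  apply Rminus_diag_uniq.
  transitivity (2 * r * p1 * ((1 + r^2) * a * p2
      + (r * (1 + r^2) * a * p1^2 + (1 + r^2) * a1 + (2 + 4 * r^2) / r * a) * p1 + 2 * p)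
    - 2 * r * p1^2 * ((1 + r^2) * a1 - (1 + 3 * r^2) / r * (1 - a) - 2 * r * p^2
      + r * (1 + r^2) * a * p1^2)); [field; lra|].
  rewrite E1, E2. ring.
Qed.

Ltac auto_derive_using_hyps :=
  auto_derive;
  [ repeat split; solve [eexists; eassumption | lra]
  | repeat match goal with
    | H : is_derive ?f ?x ?l |- context [Derive (fun y => ?f y) ?x] =>
        replace (Derive (fun y => f y) x) with l by (symmetry; apply is_derive_unique, H) end ].

Section Solution.

Variables (Rmax : R) (phi phi1 phi2 A A1 : R -> R).
Hypothesis dphi : forall r, 0 < r < Rmax -> derivable_pt_lim phi r (phi1 r).
Hypothesis dphi1 : forall r, 0 < r < Rmax -> derivable_pt_lim phi1 r (phi2 r).
Hypothesis dA : forall r, 0 < r < Rmax -> derivable_pt_lim A r (A1 r).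
Hypothesis e1 : forall r, 0 < r < Rmax -> ode1 r (phi r) (phi1 r) (phi2 r) (A r) (A1 r).
Hypothesis e2 : forall r, 0 < r < Rmax -> ode2 r (phi r) (phi1 r) (A r) (A1 r).

Definition Bderiv r := A1 r * (1 + r^2) + 2 * r * (A r - 1).

(* B' written through the second equation, free of A': differentiable again. *)
Definition Bslope r :=
  - Bfun A r / r + 2 * r * phi r ^ 2 - r * (Bfun A r + 1 + r^2) * phi1 r ^ 2.

Definition Bslope_deriv r :=
  Bfun A r / r^2 - Bderiv r / r + 2 * phi r ^ 2 + 4 * r * phi r * phi1 r
  - (Bfun A r + 1 + r^2) * phi1 r ^ 2 - r * (Bderiv r + 2 * r) * phi1 r ^ 2
  - 2 * r * (Bfun A r + 1 + r^2) * phi1 r * phi2 r.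

Definition critical_value r :=
  2 * phi1 r ^ 2 + 4 * r^2 * phi r ^ 2 * phi1 r ^ 2 + 4 * (r * phi1 r + phi r) ^ 2.

Lemma Bfun_derivable r : 0 < r < Rmax -> derivable_pt_lim (Bfun A) r (Bderiv r).
Proof.
  intro Hr. apply is_derive_Reals.
  pose proof (proj2 (is_derive_Reals _ _ _) (dA r Hr)).
  unfold Bfun. auto_derive_using_hyps. unfold Bderiv. ring.
Qed.

Lemma Bderiv_eq_Bslope r : 0 < r < Rmax -> Bderiv r = Bslope r.
Proof.
  intro Hr. exact (ode2_Bderiv r (phi r) (phi1 r) (A r) (A1 r) (proj1 Hr) (e2 r Hr)).
Qed.

Lemma Bslope_derivable r : 0 < r < Rmax -> derivable_pt_lim Bslope r (Bslope_deriv r).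
Proof.
  intro Hr. apply is_derive_Reals.
  pose proof (proj2 (is_derive_Reals _ _ _) (dA r Hr)).
  pose proof (proj2 (is_derive_Reals _ _ _) (dphi r Hr)).
  pose proof (proj2 (is_derive_Reals _ _ _) (dphi1 r Hr)).
  unfold Bslope, Bfun. auto_derive_using_hyps.
  unfold Bslope_deriv, Bderiv, Bfun. field. lra.
Qed.

Lemma Bslope_deriv_critical r :
  0 < r < Rmax -> Bderiv r = 0 -> Bslope_deriv r = critical_value r.
Proof.
  intros Hr Hcrit. unfold critical_value.
  rewrite <- (critical_point_identity r (phi r) (phi1 r) (phi2 r) (A r) (A1 r));
    [| lra | apply e1, Hr | apply e2, Hr | exact Hcrit].
  unfold Bslope_deriv, Bfun. rewrite Hcrit. field. lra.
Qed.

Lemma energy_derivative_lower_bound p :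
  0 < p < Rmax -> 0 < A p ->
  exists d L, 0 < d /\ forall x, p - d < x < p + d ->
    0 < x < Rmax /\ - L * (phi x ^ 2 + phi1 x ^ 2) <= 2 * phi x * phi1 x + 2 * phi1 x * phi2 x.
Proof.
  intros Hp HAp.
  pose (g1 x := 2 * x * (1 + x^2) * A x - 4 * x).
  pose (g2 x := (1 + 3 * x^2) * (1 - A x) + 2 * x^2 * phi x ^ 2 + (2 + 4 * x^2) * A x).
  pose proof (proj2 (is_derive_Reals _ _ _) (dA p Hp)) as HdA.
  pose proof (proj2 (is_derive_Reals _ _ _) (dphi p Hp)) as Hdphi.
  assert (Hnear : locally p (fun x => (p / 2 < x < Rmax /\ Rabs (A x - A p) < A p / 2)
                     /\ (Rabs (g1 x - g1 p) < 1 /\ Rabs (g2 x - g2 p) < 1))).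
  { apply filter_and; apply filter_and.
    - apply (locally_interval _ p (p / 2) Rmax); simpl; intros; lra.
    - apply ex_derive_locally_close; [eexists; eassumption | lra].
    - apply ex_derive_locally_close; [unfold g1; auto_derive; repeat split; eexists; eassumption | lra].
    - apply ex_derive_locally_close; [unfold g2; auto_derive; repeat split; eexists; eassumption | lra]. }
  destruct Hnear as [d Hd].
  exists d, ((Rabs (g1 p) + 1 + 2 * (Rabs (g2 p) + 1)) / (p * A p / 4)).
  split; [apply cond_pos|]. intros x Hx.
  destruct (Hd x) as [[Hx' HAx] [Hg1 Hg2]];
    [change (Rabs (x - p) < d); apply Rabs_def1; lra|].
  split; [lra|]. apply Rabs_def2 in HAx.
  apply (quadratic_form_lower_bound (x * (1 + x^2) * A x) _ (g1 x) (g2 x)).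
  - split; [pose proof (Rmult_lt_0_compat _ _ (proj1 Hp) HAp); lra|].
    assert (p * A p / 4 <= x * A x) by nra.
    assert (0 <= x^2 * (x * A x)) by (apply Rmult_le_pos; nra).
    nra.
  - pose proof (Rabs_triang_inv (g1 x) (g1 p)); lra.
  - pose proof (Rabs_triang_inv (g2 x) (g2 p)); lra.
  - apply (ode_energy_identity x _ _ _ _ (A1 x)); [lra | apply e1 | apply e2]; lra.
Qed.

(* Once phi = phi' = 0, the second equation reads (r B)' = 0. *)
Lemma A_eq_1_where_phi_trivial q p :
  p < Rmax -> A p = 1 ->
  (forall x, q < x <= p -> 0 < x -> phi x = 0 /\ phi1 x = 0) ->
  forall s, q < s <= p -> 0 < s -> A s = 1.
Proof.
  intros Hp PA Hphi s Hs Hs0.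
  destruct (Req_dec s p) as [->|Hsp]; [exact PA|].
  pose (v x := x * Bfun A x).
  pose (v' x := Bfun A x + x * Bderiv x).
  assert (Hv : forall x, 0 < x < Rmax -> derivable_pt_lim v x (v' x)).
  { intros x Hx. replace (v' x) with (1 * Bfun A x + id x * Bderiv x) by (unfold v', id; ring).
    exact (derivable_pt_lim_mult id (Bfun A) x _ _ (derivable_pt_lim_id x) (Bfun_derivable x Hx)). }
  destruct (MVT_open v v' 0 Rmax s p Hv) as [c [Hmvt Hc]]; try lra.
  destruct (Hphi c ltac:(lra) ltac:(lra)) as [C0 C1].
  assert (Hv'c : v' c = 0).
  { unfold v'. rewrite Bderiv_eq_Bslope by lra. unfold Bslope. rewrite C0, C1. field. lra. }
  assert (Hvs : s * Bfun A s = 0).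
  { assert (Hvp : v p = 0) by (unfold v, Bfun; rewrite PA; ring).
    rewrite Hvp, Hv'c in Hmvt. unfold v in Hmvt. lra. }
  unfold Bfun in Hvs.
  destruct (Rmult_integral _ _ Hvs) as [|Hprod]; [lra|].
  destruct (Rmult_integral _ _ Hprod); nra.
Qed.

Lemma trivial_solution_left p :
  0 < p < Rmax -> phi p = 0 -> phi1 p = 0 -> A p = 1 ->
  exists d, 0 < d /\
    forall x, p - d < x <= p -> 0 < x -> phi x = 0 /\ phi1 x = 0 /\ A x = 1.
Proof.
  intros Hp P0 P1 PA.
  destruct (energy_derivative_lower_bound p Hp ltac:(lra)) as [d [L [Hd Hbound]]].
  pose (u x := phi x ^ 2 + phi1 x ^ 2).
  assert (Hzero : forall s, p - d < s <= p -> u s = 0).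
  { apply (gronwall_backward_zero u (fun x => 2 * phi x * phi1 x + 2 * phi1 x * phi2 x)
             L (p - d) (p + d) p); [| intros; unfold u; nra | apply Hbound | lra |
             unfold u; rewrite P0, P1; ring].
    intros x Hx. destruct (Hbound x Hx) as [Hx' _]. apply is_derive_Reals.
    pose proof (proj2 (is_derive_Reals _ _ _) (dphi x Hx')).
    pose proof (proj2 (is_derive_Reals _ _ _) (dphi1 x Hx')).
    unfold u. auto_derive_using_hyps. ring. }
  assert (Hphi : forall x, p - d < x <= p -> 0 < x -> phi x = 0 /\ phi1 x = 0)
    by (intros x Hx Hx0; pose proof (Hzero x Hx); unfold u in *; split; nra).
  exists d. split; [exact Hd|]. intros x Hx Hx0.
  destruct (Hphi x Hx Hx0) as [Q0 Q1]. repeat split; [exact Q0 | exact Q1|].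
  exact (A_eq_1_where_phi_trivial (p - d) p (proj2 Hp) PA Hphi x Hx Hx0).
Qed.

Lemma trivial_solution_backward r0 :
  0 < r0 < Rmax -> phi r0 = 0 -> phi1 r0 = 0 -> A r0 = 1 ->
  forall x, 0 < x <= r0 -> phi x = 0 /\ phi1 x = 0 /\ A x = 1.
Proof.
  intros Hr0 P0 P1 PA.
  assert (Hc : forall f f', (forall x, 0 < x < Rmax -> derivable_pt_lim f x (f' x)) ->
                 forall x, 0 < x < Rmax -> continuity_pt f x)
    by (intros f f' Hf x Hx; apply derivable_continuous_pt; exists (f' x); apply Hf, Hx).
  apply downward_continuous_induction; [lra | auto | |].
  - intros m Hm Hright.
    assert (Hm' : 0 < m < Rmax) by lra.
    repeat split.
    + apply (continuity_pt_eq_right phi m r0); [exact (Hc _ _ dphi m Hm') | lra |].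
      intros x Hx. apply (Hright x Hx).
    + apply (continuity_pt_eq_right phi1 m r0); [exact (Hc _ _ dphi1 m Hm') | lra |].
      intros x Hx. apply (Hright x Hx).
    + apply (continuity_pt_eq_right A m r0); [exact (Hc _ _ dA m Hm') | lra |].
      intros x Hx. apply (Hright x Hx).
  - intros m Hm [Q0 [Q1 QA]]. apply trivial_solution_left; auto. lra.
Qed.

Hypothesis phi_nonvanishing_near_0 :
  forall s, 0 < s -> exists r, 0 < r < s /\ phi r <> 0.

Lemma critical_value_pos r : 0 < r < Rmax -> Bderiv r = 0 -> 0 < critical_value r.
Proof.
  intros Hr Hcrit. unfold critical_value.
  destruct (Req_dec (phi1 r) 0) as [P1|P1]; [destruct (Req_dec (phi r) 0) as [P0|P0]|].
  - exfalso.
    assert (HB : Bfun A r = 0).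
    { rewrite Bderiv_eq_Bslope in Hcrit by exact Hr. unfold Bslope in Hcrit.
      rewrite P0, P1 in Hcrit.
      replace (Bfun A r) with (- (- Bfun A r / r + 2 * r * 0 ^ 2 - r * (Bfun A r + 1 + r^2) * 0 ^ 2) * r)
        by (field; lra).
      rewrite Hcrit. ring. }
    assert (PA : A r = 1) by (unfold Bfun in HB; destruct (Rmult_integral _ _ HB); nra).
    destruct (phi_nonvanishing_near_0 r ltac:(lra)) as [x [Hx Hphix]].
    apply Hphix, (trivial_solution_backward r Hr P0 P1 PA). lra.
  - rewrite P1. ring_simplify. pose proof (pow2_gt_0 _ P0). lra.
  - pose proof (pow2_gt_0 _ P1). pose proof (pow2_ge_0 (r * phi1 r + phi r)).
    assert (0 <= r ^ 2 * phi r ^ 2 * phi1 r ^ 2)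
      by (rewrite <- !Rpow_mult_distr; apply pow2_ge_0).
    lra.
Qed.

Hypothesis Bfun_pos_vanishing_at_0 :
  forall eps, 0 < eps -> exists delta, 0 < delta /\ forall r, 0 < r < delta -> 0 < Bfun A r < eps.

Lemma Bfun_pos_near_0 s : 0 < s -> exists y, 0 < y < s /\ 0 < Bfun A y.
Proof.
  intro Hs. destruct (Bfun_pos_vanishing_at_0 1) as [d [Hd Hnear]]; [lra|].
  exists (Rmin d s / 2). pose proof (Rmin_l d s). pose proof (Rmin_r d s).
  pose proof (Rmin_pos d s Hd Hs).
  split; [lra|]. apply Hnear. lra.
Qed.

Lemma Bderiv_nonneg s : 0 < s < Rmax -> 0 <= Bderiv s.
Proof.
  intro Hs. apply Rnot_lt_le; intro Hneg.
  assert (Hdecr : forall x, 0 < x <= s -> Bderiv x < 0).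
  { intros x Hx. rewrite Bderiv_eq_Bslope by lra.
    apply (negative_left_of_upcrossings Bslope Bslope_deriv 0 s); [| | lra | | exact Hx].
    - intros y Hy. apply Bslope_derivable. lra.
    - intros y Hy Hzero. rewrite Bslope_deriv_critical by (try rewrite Bderiv_eq_Bslope; lra).
      apply critical_value_pos; [lra|]. rewrite Bderiv_eq_Bslope; lra.
    - rewrite <- Bderiv_eq_Bslope; lra. }
  destruct (Bfun_pos_near_0 s ltac:(lra)) as [y [Hy HBy]].
  destruct (Bfun_pos_vanishing_at_0 (Bfun A y) HBy) as [d [Hd Hnear]].
  set (x := Rmin d y / 2).
  assert (Hx : 0 < x < y /\ x < d)
    by (pose proof (Rmin_l d y); pose proof (Rmin_r d y); pose proof (Rmin_pos d y Hd ltac:(lra));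
        unfold x; lra).
  destruct (MVT_open (Bfun A) Bderiv 0 Rmax x y Bfun_derivable) as [c [Hmvt Hc]]; try lra.
  pose proof (Hdecr c ltac:(lra)). pose proof (Hnear x ltac:(lra)). nra.
Qed.

Lemma Bfun_nondecreasing r s : 0 < r <= s -> s < Rmax -> Bfun A r <= Bfun A s.
Proof.
  intros Hrs Hs. destruct (Req_dec r s) as [->|Hne]; [lra|].
  destruct (MVT_open (Bfun A) Bderiv 0 Rmax r s Bfun_derivable) as [c [Hmvt Hc]]; try lra.
  pose proof (Bderiv_nonneg c ltac:(lra)). nra.
Qed.

Lemma Bfun_increasing r s : 0 < r < s -> s < Rmax -> Bfun A r < Bfun A s.
Proof.
  intros Hrs Hs. destruct (Rlt_or_le (Bfun A r) (Bfun A s)) as [|Hle]; [assumption | exfalso].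
  assert (Hconst : forall t, r < t < s -> Bfun A r = Bfun A t).
  { intros t Ht. pose proof (Bfun_nondecreasing r t ltac:(lra) ltac:(lra)).
    pose proof (Bfun_nondecreasing t s ltac:(lra) ltac:(lra)). lra. }
  assert (Hslope0 : forall t, r < t < s -> Bslope t = 0).
  { intros t Ht. rewrite <- Bderiv_eq_Bslope by lra.
    apply (uniqueness_limite (fun _ => Bfun A r) t); [|apply derivable_pt_lim_const].
    apply (derivable_pt_lim_locally_ext (Bfun A) _ t r s); [lra | intros; symmetry; apply Hconst; lra |].
    apply Bfun_derivable. lra. }
  set (m := (r + s) / 2).
  assert (Hm : r < m < s) by (unfold m; lra).
  assert (Hcrit : Bderiv m = 0) by (rewrite Bderiv_eq_Bslope; [apply Hslope0 | ]; lra).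
  assert (Hderiv0 : Bslope_deriv m = 0).
  { apply (uniqueness_limite Bslope m); [apply Bslope_derivable; lra|].
    apply (derivable_pt_lim_locally_ext (fun _ => 0) _ m r s); [lra | intros; symmetry; apply Hslope0; lra |].
    apply derivable_pt_lim_const. }
  rewrite Bslope_deriv_critical in Hderiv0 by (lra || exact Hcrit).
  pose proof (critical_value_pos m ltac:(lra) Hcrit). lra.
Qed.

Lemma A_ge_1 r : 0 < r < Rmax -> 1 <= A r.
Proof.
  intro Hr. destruct (Bfun_pos_near_0 r ltac:(lra)) as [y [Hy HBy]].
  pose proof (Bfun_nondecreasing y r ltac:(lra) ltac:(lra)).
  unfold Bfun in *. nra.
Qed.

Lemma Bfun_second_derivative_at_critical (B1 : R -> R) r0 b2 :
  (forall r, 0 < r < Rmax -> derivable_pt_lim (Bfun A) r (B1 r)) ->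
  0 < r0 < Rmax -> derivable_pt_lim B1 r0 b2 -> B1 r0 = 0 ->
  b2 = critical_value r0 /\ 0 < b2.
Proof.
  intros HB1 Hr0 Hb2 Hcrit.
  assert (HB1eq : forall r, 0 < r < Rmax -> B1 r = Bslope r).
  { intros r Hr. rewrite <- Bderiv_eq_Bslope by exact Hr.
    exact (uniqueness_limite _ _ _ _ (HB1 r Hr) (Bfun_derivable r Hr)). }
  assert (Hcrit' : Bderiv r0 = 0) by (rewrite Bderiv_eq_Bslope, <- HB1eq; assumption).
  assert (Hb2' : b2 = critical_value r0).
  { rewrite <- Bslope_deriv_critical by assumption.
    apply (uniqueness_limite Bslope r0); [|apply Bslope_derivable, Hr0].
    exact (derivable_pt_lim_locally_ext B1 Bslope r0 0 Rmax b2 Hr0 HB1eq Hb2). }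
  split; [exact Hb2'|]. rewrite Hb2'. apply critical_value_pos; assumption.
Qed.

End Solution.

Theorem mainTheorem2
  (c Rmax : R) (phi phi1 phi2 A A1 : R -> R)
  (hc : c <> 0) (hR : 0 < Rmax)
  (dphi : forall r, 0 < r < Rmax -> derivable_pt_lim phi r (phi1 r))
  (dphi1 : forall r, 0 < r < Rmax -> derivable_pt_lim phi1 r (phi2 r))
  (dA : forall r, 0 < r < Rmax -> derivable_pt_lim A r (A1 r))
  (e1 : forall r, 0 < r < Rmax -> ode1 r (phi r) (phi1 r) (phi2 r) (A r) (A1 r))
  (e2 : forall r, 0 < r < Rmax -> ode2 r (phi r) (phi1 r) (A r) (A1 r))
  (asym_phi : bigO4_at_0plus phi (fun r => c - 1/3 * c * r^2))
  (asym_A : bigO4_at_0plus A (fun r => 1 + 2/3 * c^2 * r^2)) :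
  (forall (B1 : R -> R) (r0 b2 : R),
      (forall r, 0 < r < Rmax -> derivable_pt_lim (Bfun A) r (B1 r)) ->
      0 < r0 < Rmax ->
      derivable_pt_lim B1 r0 b2 ->
      B1 r0 = 0 ->
      b2 = 2 * (phi1 r0)^2 + 4 * r0^2 * (phi r0)^2 * (phi1 r0)^2
           + 4 * (r0 * phi1 r0 + phi r0)^2
      /\ 0 < b2)
  /\ (forall r s, 0 < r -> r < s -> s < Rmax -> Bfun A r < Bfun A s)
  /\ (forall r, 0 < r < Rmax -> 1 <= A r).
Proof.
  pose proof (bigO4_nonvanishing_near_0 phi c hc asym_phi) as Hphi.
  pose proof (Bfun_pos_vanishing_of_bigO4 A c hc asym_A) as HB.
  split; [|split].
  - intros B1 r0 b2 HB1 Hr0 Hb2 Hcrit.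
    exact (Bfun_second_derivative_at_critical Rmax phi phi1 phi2 A A1
             dphi dphi1 dA e1 e2 Hphi B1 r0 b2 HB1 Hr0 Hb2 Hcrit).
  - intros r s Hr Hrs Hs.
    exact (Bfun_increasing Rmax phi phi1 phi2 A A1 dphi dphi1 dA e1 e2 Hphi HB r s
             (conj Hr Hrs) Hs).
  - exact (A_ge_1 Rmax phi phi1 phi2 A A1 dphi dphi1 dA e1 e2 Hphi HB).
Qed.
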